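(* Let $R$ be a commutative ring with $\mathbb{Q}\subseteq R$, $\mathcal{A}$ a commutative unital $R$-algebra, and $\mathcal{E}$ a finitely generated projective $\mathcal{A}$-module with a symmetric, strongly nondegenerate, full $\mathcal{A}$-bilinear form $\langle\cdot,\cdot\rangle$. Let $\mathsf{C}_1\in\mathcal{C}^r(\mathcal{E})$ and $\mathsf{C}_2\in\mathcal{C}^s(\mathcal{E})$ with $r,s\ge1$. Then for all $x_1,\dots,x_{r+s-1}\in\mathcal{E}$: $$(\mathsf{C}_1\wedge\mathsf{C}_2)(x_1,\dots,x_{r+s-1})=(-1)^{rs}\sum_{\pi\in\mathrm{Sh}(r,s-1)}\operatorname{sign}(\pi)\,\langle\mathsf{C}_1(x_{\pi(1)},\dots,x_{\pi(r-1)}),x_{\pi(r)}\rangle\,\mathsf{C}_2(x_{\pi(r+1)},\dots,x_{\pi(r+s-1)})$$ $$\qquad+\sum_{\pi\in\mathrm{Sh}(s,r-1)}\operatorname{sign}(\pi)\,\langle\mathsf{C}_2(x_{\pi(1)},\dots,x_{\pi(s-1)}),x_{\pi(s)}\rangle\,\mathsf{C}_1(x_{\pi(s+1)},\dots,x_{\pi(r+s-1)}).$$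
   Context: Strongly nondegenerate: $\mathcal{E}\to\operatorname{Hom}_{\mathcal{A}}(\mathcal{E},\mathcal{A})$ is an isomorphism. Full: every $a\in\mathcal{A}$ is a finite sum $\sum_i\langle x_i,y_i\rangle$. $\operatorname{Der}(\mathcal{A})$: $R$-linear derivations of $\mathcal{A}$. $\mathcal{C}^0(\mathcal{E})=\mathcal{A}$ and $\mathcal{C}^1(\mathcal{E})=\mathcal{E}$. An element of $\mathcal{C}^1$ is regarded as a map with zero arguments; for $y\in\mathcal{E}$, $y()=y$. For $r\ge2$, $\mathcal{C}^r(\mathcal{E})$ is the set of $\mathsf{C}\in\operatorname{Hom}_R(\mathcal{E}^{\otimes_R(r-1)},\mathcal{E})$ admitting an $R$-multilinear symbol $\sigma_{\mathsf{C}}:\mathcal{E}^{\otimes(r-2)}\to\operatorname{Der}(\mathcal{A})$ with two properties: (1) $\sigma_{\mathsf{C}}(x_1,\dots,x_{r-2})\langle u,w\rangle=\langle\mathsf{C}(x_1,\dots,x_{r-2},u),w\rangle+\langle u,\mathsf{C}(x_1,\dots,x_{r-2},w)\rangle$; (2) for $r\ge3$ and $1\le i\le r-2$, $\langle\mathsf{C}(\dots,x_i,x_{i+1},\dots)+\mathsf{C}(\dots,x_{i+1},x_i,\dots),u\rangle=\sigma_{\mathsf{C}}(x_1,\dots,\widehat{x_i},\widehat{x_{i+1}},\dots,x_{r-1},u)\langle x_i,x_{i+1}\rangle$. $i_x\mathsf{C}$ inserts $x$ in the first argument. $[\cdot,\cdot]$ is the unique $R$-bilinear graded skew-symmetric map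 $\mathcal{C}^r\times\mathcal{C}^s\to\mathcal{C}^{r+s-2}$ with: - $[a,b]=0$ and $[a,x]=0=[x,a]$; - $[x,y]=\langle x,y\rangle$; - $[\mathsf{D},a]=\sigma_{\mathsf{D}}(a)=-[a,\mathsf{D}]$ for $\mathsf{D}\in\mathcal{C}^2$; - $[\mathsf{C},x]=i_x\mathsf{C}=(-1)^{r+1}[x,\mathsf{C}]$ for $\mathsf{C}\in\mathcal{C}^r$ with $r\ge2$; - $[[\mathsf{C}_1,\mathsf{C}_2],x]=(-1)^s[[\mathsf{C}_1,x],\mathsf{C}_2]+[\mathsf{C}_1,[\mathsf{C}_2,x]]$. $\wedge$ is the unique degree-$0$ $R$-bilinear product with $a\wedge b=ab$, $a\wedge x=ax=x\wedge a$, and $[\mathsf{C}_1\wedge\mathsf{C}_2,x]=(-1)^s[\mathsf{C}_1,x]\wedge\mathsf{C}_2+\mathsf{C}_1\wedge[\mathsf{C}_2,x]$. $\mathrm{Sh}(p,q)$ denotes the set of $(p,q)$-shuffles: permutations $\pi$ of $\{1,\dots,p+q\}$ with $\pi(1)<\dots<\pi(p)$ and $\pi(p+1)<\dots<\pi(p+q)$. *)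

From HB Require Import structures.
From mathcomp Require Import all_boot all_order all_algebra perm.
Set Implicit Arguments. Unset Strict Implicit. Unset Printing Implicit Defensive.
Import Order.TTheory GRing.Theory.
Local Open Scope ring_scope.

Section Cochains.
Variables (R : comNzRingType) (A : comAlgType R) (E : lmodType A).
Variable form : E -> E -> A.

Definition rsc (c : R) (u : E) : E := (c%:A) *: u.

Definition is_derivation (D : A -> A) : Prop :=
  (forall (c : R) (a b : A), D (c *: a + b) = c *: D a + D b) /\
  (forall a b : A, D (a * b) = D a * b + a * D b).

(* An element of C^r, r >= 2, is a map C on (r-1)-lists of elements of E;
   only its values on lists of size r-1 are relevant.
   An element of C^1 = E is a map with zero arguments: y() = y, i.e. the
   vector is C [::]. *)
Definition in_C (r : nat) (C : seq E -> E) : Prop :=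
  match r with
  | r'.+2 =>
    (forall (pre post : seq E) (c : R) (u v : E),
        size pre + size post = r' ->
        C (pre ++ (rsc c u + v) :: post) =
          rsc c (C (pre ++ u :: post)) + C (pre ++ v :: post)) /\
    exists sigma : seq E -> A -> A,
      (forall xs : seq E, size xs = r' -> is_derivation (sigma xs)) /\
      (forall (pre post : seq E) (c : R) (u v : E) (a : A),
          size pre + (size post).+1 = r' ->
          sigma (pre ++ (rsc c u + v) :: post) a =
            c *: sigma (pre ++ u :: post) a + sigma (pre ++ v :: post) a) /\
      (forall (xs : seq E) (u w : E), size xs = r' ->
          sigma xs (form u w) = form (C (rcons xs u)) w + form u (C (rcons xs w))) /\
      (* property (2), for pairs of adjacent positions (i, i+1), 1 <= i <= r-2 *)
      (forall (pre post : seq E) (a b u : E),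
          size pre + (size post).+2 = r'.+1 ->
          form (C (pre ++ a :: b :: post) + C (pre ++ b :: a :: post)) u =
            sigma (pre ++ rcons post u) (form a b))
  | _ => True
  end.

(* Cochains of arbitrary degree: Sc a is a in C^0 = A, Vc r f is f in C^r
   (r >= 1). *)
Inductive cochain : Type :=
  | Sc of A
  | Vc of nat & (seq E -> E).

Definition deg (c : cochain) : nat :=
  match c with Sc _ => 0%N | Vc r _ => r end.

(* [c, x] : for c in C^0, [a,x] = 0; for c = y in C^1, [y,x] = <y,x>;
   for C in C^r, r >= 2, [C,x] = i_x C (insertion in the first argument). *)
Definition brx (c : cochain) (x : E) : cochain :=
  match c with
  | Sc _ => Sc 0
  | Vc 0 _ => Sc 0
  | Vc 1 f => Sc (form (f [::]) x)
  | Vc r.+2 f => Vc r.+1 (fun xs => f (x :: xs))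
  end.

(* Evaluation of the wedge product c1 /\ c2 (of degree deg c1 + deg c2 >= 1)
   at the argument list xs, determined by
     a /\ x = a x = x /\ a   (degree 1 case), and
     [C1 /\ C2, x] = (-1)^s [C1, x] /\ C2 + C1 /\ [C2, x]  (s = deg C2),
   where [C, x] = i_x C inserts x as first argument. *)
Fixpoint wedge_ev (c1 c2 : cochain) (xs : seq E) {struct xs} : E :=
  match xs with
  | [::] =>
    match c1, c2 with
    | Sc a, Vc 1 f => a *: f [::]
    | Vc 1 f, Sc a => a *: f [::]
    | _, _ => 0
    end
  | x :: xs' =>
    ((-1) ^+ deg c2) *: wedge_ev (brx c1 x) c2 xs' + wedge_ev c1 (brx c2 x) xs'
  end.

End Cochains.

(* (p, n-p)-shuffles of {0, ..., n-1} (0-based version of Sh(p, q)) *)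
Definition is_shuffle (n p : nat) (pi : 'S_n) : bool :=
  [forall i : 'I_n, forall j : 'I_n,
     ((i < j)%N && ((j < p)%N || (p <= i)%N)) ==> (pi i < pi j)%N].

(* x at a natural-number index (0 outside range) *)
Definition at_nat (T : nmodType) (n : nat) (x : 'I_n -> T) (i : nat) : T :=
  match @insub nat (fun k => (k < n)%N) _ i with
  | Some j => x j
  | None => 0
  end.

(* the list [x_{pi(k+1)}, ..., x_{pi(k+m)}] (1-based), i.e. 0-based
   indices k, ..., k+m-1 *)
Definition xs_pi (T : nmodType) (n : nat) (x : 'I_n -> T) (pi : 'S_n)
  (k m : nat) : seq T :=
  [seq at_nat (fun i => x (pi i)) j | j <- iota k m].

From HB Require Import structures.
From mathcomp Require Import all_boot all_order all_algebra perm zify.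
Import GRing.Theory.
Local Open Scope ring_scope.
Set Implicit Arguments. Unset Strict Implicit. Unset Printing Implicit Defensive.

(* The wedge product is defined by the derivation rule
   [C1 /\ C2, x] = (-1)^s [C1, x] /\ C2 + C1 /\ [C2, x], i.e. by recursion on the
   first argument.  In a summand of the shuffle formula the first argument x_1
   sits either in the first slot of the first block or in the first slot of the
   second block; deleting it turns the shuffle into a shuffle with one block
   shorter by one, and in the second case costs the sign of moving x_1 across
   the first block.  These two families of summands are exactly the two terms
   of the derivation rule, so the formula follows by induction on the number of
   arguments. *)

Lemma big_lift_perm (V : nmodType) n (i0 j0 : 'I_n.+1) (P : pred 'S_n.+1)
    (F : 'S_n.+1 -> V) :
  \sum_(pi | P pi && (pi i0 == j0)) F pi =
  \sum_(s : 'S_n | P (lift_perm i0 j0 s)) F (lift_perm i0 j0 s).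
Proof.
rewrite (reindex (lift_perm i0 j0)); last first.
  pose unlift_fun i (s : 'S_n.+1) k := odflt k (unlift (s i) (s (lift i k))).
  have unlift_funK i (s : 'S_n.+1) k : lift (s i) (unlift_fun i s k) = s (lift i k).
    rewrite /unlift_fun; have:= neq_lift i k.
    by rewrite -(can_eq (permK s)) => /unlift_some[] ? ? ->.
  have inj_unlift_fun : injective (unlift_fun i0 _).
    move=> s; apply: can_inj (unlift_fun (s i0) s^-1%g) _ => k'.
    by rewrite {1}/unlift_fun unlift_funK !permK liftK.
  exists (fun s => perm (inj_unlift_fun s)) => [s _ | s].
    by apply/permP=> k'; rewrite permE /unlift_fun lift_perm_lift lift_perm_id liftK.
  case/andP=> _ /eqP si0; apply/permP=> k.
  case: (unliftP i0 k) => [k'|] ->; rewrite ?lift_perm_id //.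
  by rewrite lift_perm_lift -si0 permE unlift_funK.
by apply: eq_bigl => s; rewrite lift_perm_id eqxx andbT.
Qed.

Lemma is_shuffleP n p (pi : 'S_n) :
  reflect (forall i j : 'I_n, (i < j)%N -> (j < p)%N || (p <= i)%N -> (pi i < pi j)%N)
          (is_shuffle p pi).
Proof.
apply: (iffP forallP) => [sh i j lt_ij hp | sh i].
  by have /forallP/(_ j) := sh i; rewrite lt_ij hp.
by apply/forallP => j; apply/implyP => /andP[] /sh; apply.
Qed.

Lemma increasing_perm_eq1 n (s : 'S_n) : {homo s : i j / (i < j)%N} -> s = 1%g.
Proof.
have ge_id (t : 'S_n) : {homo t : i j / (i < j)%N} -> forall i : 'I_n, (i <= t i)%N.
  move=> inc_t [i lt_in]; elim: i lt_in => [//|i IHi] lt_in /=.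
  apply: leq_ltn_trans (IHi (ltnW lt_in)) _.
  exact: (inc_t (Ordinal (ltnW lt_in)) (Ordinal lt_in)).
move=> inc_s; have inc_sV : {homo s^-1%g : i j / (i < j)%N}.
  move=> i j lt_ij; rewrite ltnNge leq_eqVlt; apply/negP.
  case/orP=> [/eqP/val_inj/perm_inj eq_ji | /inc_s]; first by rewrite eq_ji ltnn in lt_ij.
  by rewrite !permKV ltnNge (ltnW lt_ij).
apply/permP => i; apply/val_inj/eqP; rewrite perm1 /= eqn_leq ge_id // andbT.
by have := ge_id _ inc_sV (s i); rewrite permK.
Qed.

Lemma is_shuffle0 n (s : 'S_n) : is_shuffle 0 s = (s == 1%g).
Proof.
apply/is_shuffleP/eqP => [inc_s | -> i j lt_ij _]; last by rewrite !perm1.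
by apply: increasing_perm_eq1 => i j lt_ij; apply: inc_s.
Qed.

Section ShuffleLiftPerm.
Variables (n q : nat) (i0 : 'I_n.+1) (s : 'S_n).
Let pi := lift_perm i0 ord0 s.

Lemma lift_perm_shuffle_pivot :
  is_shuffle q pi -> (i0 == 0 :> nat) || (i0 == q :> nat).
Proof.
move/is_shuffleP=> sh; apply/contraT; rewrite negb_or => /andP[ne0 neq].
have pi_i0 : pi i0 = 0 :> nat by rewrite /pi lift_perm_id.
have [lt_i0q | lt_qi0] := ltnP i0 q.
  by have := sh ord0 i0; rewrite lt0n ne0 lt_i0q pi_i0 => /(_ isT isT).
have lt_qn : (q < n.+1)%N by apply: leq_ltn_trans lt_qi0 (ltn_ord i0).
have := sh (Ordinal lt_qn) i0; rewrite pi_i0 leqnn orbT ltn_neqAle eq_sym neq.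
by move=> /(_ lt_qi0 isT).
Qed.

Lemma lift_perm_shuffle t :
    (i0 == 0 :> nat) || (i0 == q :> nat) ->
    (forall k, (bump i0 k < q)%N = (k < t)%N) ->
  is_shuffle q pi = is_shuffle t s.
Proof.
move=> pivot thr; have thr' k : (q <= bump i0 k)%N = (t <= k)%N.
  by rewrite leqNgt thr -leqNgt.
have pi_lift k : pi (lift i0 k) = (s k).+1 :> nat by rewrite /pi lift_perm_lift.
have lt_lift k l : (lift i0 k < lift i0 l)%N = (k < l)%N.
  by rewrite /= !ltnNge leq_bump2.
apply/is_shuffleP/is_shuffleP => sh i j lt_ij hp.
  have := sh (lift i0 i) (lift i0 j); rewrite !pi_lift lt_lift /= thr thr'.
  by move=> /(_ lt_ij hp).
case: (unliftP i0 i) => [i'|] -> in lt_ij hp *; last first.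
  case: (unliftP i0 j) => [j'|] -> in lt_ij *; last by rewrite ltnn in lt_ij.
  by rewrite pi_lift /pi lift_perm_id.
case: (unliftP i0 j) => [j'|] -> in lt_ij hp *.
  by rewrite !pi_lift ltnS; apply: sh; rewrite -?lt_lift // -thr -thr'.
by exfalso; move: lt_ij hp pivot; rewrite /= /bump; case: (i0 <= i')%N; lia.
Qed.

End ShuffleLiftPerm.

Lemma is_shuffleS_lift_perm n p (i0 : 'I_n.+1) (s : 'S_n) :
  is_shuffle p.+1 (lift_perm i0 ord0 s) =
    if i0 == ord0 then is_shuffle p s
    else (i0 == p.+1 :> nat) && is_shuffle p.+1 s.
Proof.
case: eqP => [-> | /eqP ne0]; first by apply: lift_perm_shuffle.
have [eq_i0 | ne_i0] /= := eqVneq (i0 : nat) p.+1.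
  apply: lift_perm_shuffle; first by rewrite eq_i0 eqxx orbT.
  by move=> k; rewrite /bump eq_i0; case: ltnP => /= hk; lia.
apply/negP => /lift_perm_shuffle_pivot.
by rewrite (negbTE ne_i0) orbF => /eqP eq0; case/eqP: ne0; apply: val_inj.
Qed.

Lemma sum_shuffleS (V : nmodType) n p (F : 'S_n.+1 -> V) :
  \sum_(pi | is_shuffle p.+1 pi) F pi =
  \sum_(s : 'S_n | is_shuffle p s) F (lift_perm ord0 ord0 s) +
  (if (p.+1 <= n)%N then
     \sum_(s : 'S_n | is_shuffle p.+1 s) F (lift_perm (inord p.+1) ord0 s)
   else 0).
Proof.
rewrite (partition_big (fun pi : 'S_n.+1 => (pi^-1)%g ord0) xpredT) //=.
under eq_bigr => i0 _.
  rewrite (eq_bigl (fun pi => is_shuffle p.+1 pi && (pi i0 == ord0))); last first.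
    by move=> pi; rewrite (canF_eq (permK pi)) eq_sym.
  rewrite big_lift_perm.
  under eq_bigl => s do rewrite is_shuffleS_lift_perm.
  over.
rewrite (bigD1 ord0) //=; congr (_ + _).
have no_pivot (i0 : 'I_n.+1) : i0 != ord0 -> (i0 : nat) != p.+1 ->
    \sum_(s : 'S_n | if i0 == ord0 then is_shuffle p s
                     else (i0 == p.+1 :> nat) && is_shuffle p.+1 s)
      F (lift_perm i0 ord0 s) = 0.
  by move=> /negbTE-> /negbTE->; rewrite big_pred0.
case: ifP => [le_pn | gt_pn]; last first.
  rewrite big1 // => i0 ne0; apply: no_pivot => //.
  by rewrite neq_ltn (leq_trans (ltn_ord i0)) // ltnNge gt_pn.
have ne0 : (inord p.+1 : 'I_n.+1) != ord0 by rewrite -val_eqE /= inordK.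
rewrite (bigD1 (inord p.+1)) //= (negbTE ne0) inordK // eqxx [X in _ + X]big1 ?addr0 //.
move=> i0 /andP[ne0' neS]; apply: no_pivot => //.
by apply: contra neS => /eqP eq_i0; rewrite -val_eqE /= inordK -?eq_i0.
Qed.

Lemma at_natE (T : nmodType) n (y : 'I_n -> T) j (lt_jn : (j < n)%N) :
  at_nat y j = y (Ordinal lt_jn).
Proof. by rewrite /at_nat insubT. Qed.

Lemma at_nat_out (T : nmodType) n (y : 'I_n -> T) j : (n <= j)%N -> at_nat y j = 0.
Proof. by move=> le_nj; rewrite /at_nat insubF // ltnNge le_nj. Qed.

Section ArgsLiftPerm.
Variables (T : nmodType) (n : nat) (x : 'I_n.+1 -> T) (i0 : 'I_n.+1) (s : 'S_n).
Let x' i := x (lift ord0 i).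
Let pi := lift_perm i0 ord0 s.

Lemma at_nat_lift_perm j :
  at_nat (fun i => x (pi i)) j =
    if j == i0 then x ord0 else at_nat (fun i => x' (s i)) (unbump i0 j).
Proof.
have [lt_jn | le_nj] := ltnP j n.+1; last first.
  have lt_i0j : (i0 < j)%N by apply: leq_trans (ltn_ord i0) le_nj.
  rewrite gtn_eqF // !at_nat_out // /unbump lt_i0j subn1.
  by rewrite -ltnS prednK // (leq_trans _ lt_i0j).
rewrite (at_natE _ lt_jn); set jo := Ordinal lt_jn.
have -> : j = jo by []; clearbody jo.
case: (unliftP i0 jo) => [k|] ->; last by rewrite /pi lift_perm_id eqxx.
rewrite val_eqE eq_sym (negbTE (neq_lift _ _)) /pi lift_perm_lift /= bumpK.
by rewrite (at_natE _ (ltn_ord k)) (_ : Ordinal _ = k) //; apply: val_inj.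
Qed.

Lemma at_nat_lift_perm_lt j : (j < i0)%N ->
  at_nat (fun i => x (pi i)) j = at_nat (fun i => x' (s i)) j.
Proof.
by move=> lt_ji0; rewrite at_nat_lift_perm ltn_eqF // /unbump ltnNge (ltnW lt_ji0) subn0.
Qed.

Lemma at_nat_lift_perm_ge j : (i0 <= j)%N ->
  at_nat (fun i => x (pi i)) j.+1 = at_nat (fun i => x' (s i)) j.
Proof.
by move=> le_i0j; rewrite at_nat_lift_perm gtn_eqF // /unbump ltnS le_i0j subn1.
Qed.

Lemma at_nat_lift_perm_pivot k : k = i0 :> nat -> at_nat (fun i => x (pi i)) k = x ord0.
Proof. by move->; rewrite at_nat_lift_perm eqxx. Qed.

Lemma xs_pi_lift_perm_lt k m : (k + m <= i0)%N -> xs_pi x pi k m = xs_pi x' s k m.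
Proof.
move=> le_i0; apply/eq_in_map => j; rewrite mem_iota => /andP[_ lt_j].
by apply: at_nat_lift_perm_lt; apply: leq_trans le_i0.
Qed.

Lemma xs_pi_lift_perm_ge k m : (i0 <= k)%N -> xs_pi x pi k.+1 m = xs_pi x' s k m.
Proof.
move=> le_i0k; rewrite /xs_pi -[k.+1]add1n iotaDl -map_comp.
apply/eq_in_map => j; rewrite mem_iota => /andP[le_kj _] /=.
by rewrite add1n at_nat_lift_perm_ge // (leq_trans le_i0k).
Qed.

Lemma xs_pi_lift_perm_pivot k m : k = i0 :> nat ->
  xs_pi x pi k m.+1 = x ord0 :: xs_pi x' s k m.
Proof.
by move->; rewrite -xs_pi_lift_perm_ge // /xs_pi /= at_nat_lift_perm_pivot.
Qed.

End ArgsLiftPerm.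

Lemma xs_pi1 (T : nmodType) n (y : 'I_n -> T) :
  xs_pi y 1%g 0 n = [seq y i | i <- enum 'I_n].
Proof.
rewrite /xs_pi -val_enum_ord -map_comp; apply: eq_map => i /=.
by rewrite (at_natE _ (ltn_ord i)) perm1; congr y; apply: val_inj.
Qed.

Section Wedge.
Variables (R : comNzRingType) (A : comAlgType R) (E : lmodType A).
Variable form : E -> E -> A.
Local Notation wedge := (wedge_ev form).

Lemma wedge_ev0l xs c : wedge (Sc E 0) c xs = 0.
Proof.
elim: xs c => [|y xs IHxs] [a|[|[|r]] f] /=; rewrite ?scale0r //.
all: by rewrite !IHxs scaler0 addr0.
Qed.

Lemma wedge_ev0r xs c : wedge c (Sc E 0) xs = 0.
Proof.
elim: xs c => [|y xs IHxs] [a|[|[|r]] f] /=; rewrite ?scale0r //.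
all: by rewrite !IHxs scaler0 addr0.
Qed.

Lemma wedge_ev_ScVc a s (f : seq E -> E) xs :
  size xs = s -> wedge (Sc E a) (Vc s.+1 f) xs = a *: f xs.
Proof.
elim: xs s f => [|y xs IHxs] [|s] f //= [size_xs].
by rewrite wedge_ev0l scaler0 add0r IHxs.
Qed.

Lemma wedge_ev_VcSc a r (f : seq E -> E) xs :
  size xs = r -> wedge (Vc r.+1 f) (Sc E a) xs = a *: f xs.
Proof.
elim: xs r f => [|y xs IHxs] [|r] f //= [size_xs].
by rewrite wedge_ev0r addr0 scale1r IHxs.
Qed.

End Wedge.

Section Shuffles.
Variables (R : comNzRingType) (A : comAlgType R) (E : lmodType A).
Variable form : E -> E -> A.

(* The summand of a (r+1, s)-shuffle pi: C1 takes r arguments, x_{pi r} goes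
   into the form and C2 takes s arguments. *)
Definition shuffle_term (C1 C2 : seq E -> E) r s n (x : 'I_n -> E) (pi : 'S_n) : E :=
  ((-1) ^+ odd_perm pi * form (C1 (xs_pi x pi 0 r)) (at_nat (fun i => x (pi i)) r))
    *: C2 (xs_pi x pi r.+1 s).

Definition shuffle_sum (C1 C2 : seq E -> E) r s n (x : 'I_n -> E) : E :=
  \sum_(pi : 'S_n | is_shuffle r.+1 pi) shuffle_term C1 C2 r s x pi.

Section ShuffleSumCons.
Variables (n : nat) (x : 'I_n.+1 -> E).
Let x' i := x (lift ord0 i).

Lemma shuffle_term_first C1 C2 r s (sigma : 'S_n) :
  shuffle_term C1 C2 r.+1 s x (lift_perm ord0 ord0 sigma) =
    shuffle_term (fun ys => C1 (x ord0 :: ys)) C2 r s x' sigma.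
Proof.
rewrite /shuffle_term odd_lift_perm xs_pi_lift_perm_pivot //.
by rewrite at_nat_lift_perm_ge ?xs_pi_lift_perm_ge.
Qed.

Lemma shuffle_term_first0 C1 C2 s (sigma : 'S_n) :
  shuffle_term C1 C2 0 s x (lift_perm ord0 ord0 sigma) =
    ((-1) ^+ odd_perm sigma * form (C1 [::]) (x ord0)) *: C2 (xs_pi x' sigma 0 s).
Proof.
by rewrite /shuffle_term odd_lift_perm at_nat_lift_perm_pivot // xs_pi_lift_perm_ge.
Qed.

Lemma shuffle_term_second C1 C2 r s (sigma : 'S_n) : (r.+1 <= n)%N ->
  shuffle_term C1 C2 r s.+1 x (lift_perm (inord r.+1) ord0 sigma) =
    (-1) ^+ r.+1 *: shuffle_term C1 (fun ys => C2 (x ord0 :: ys)) r s x' sigma.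
Proof.
move=> le_rn; have i0E : @inord n r.+1 = r.+1 :> nat by rewrite inordK.
rewrite /shuffle_term odd_lift_perm i0E addbF signr_addb signr_odd.
rewrite xs_pi_lift_perm_lt ?i0E // at_nat_lift_perm_lt ?i0E //.
by rewrite xs_pi_lift_perm_pivot // scalerA !mulrA.
Qed.

Lemma shuffle_sum_cons C1 C2 r s : (r + s)%N = n ->
  shuffle_sum C1 C2 r s x =
    (if r is r'.+1 then shuffle_sum (fun ys => C1 (x ord0 :: ys)) C2 r' s x'
     else form (C1 [::]) (x ord0) *: C2 [seq x' i | i <- enum 'I_n]) +
    (if s is s'.+1
     then (-1) ^+ r.+1 *: shuffle_sum C1 (fun ys => C2 (x ord0 :: ys)) r s' x'
     else 0).
Proof.
move=> def_n; rewrite /shuffle_sum sum_shuffleS; congr (_ + _).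
  case: r def_n => [|r] def_n; last first.
    by apply: eq_bigr => sigma _; rewrite shuffle_term_first.
  rewrite (eq_bigl _ _ (@is_shuffle0 n)) big_pred1_eq shuffle_term_first0.
  by rewrite add0n in def_n; subst s; rewrite odd_perm1 mul1r xs_pi1.
case: s def_n => [|s] def_n; first by rewrite ifF // -def_n addn0 ltnn.
have lt_rn : (r < n)%N by rewrite -def_n addnS ltnS leq_addr.
rewrite lt_rn scaler_sumr.
by apply: eq_bigr => sigma _; rewrite shuffle_term_second.
Qed.

End ShuffleSumCons.

Lemma wedge_ev_shuffle n r s (C1 C2 : seq E -> E) (x : 'I_n -> E) :
  (r + s).+1%N = n ->
  wedge_ev form (Vc r.+1 C1) (Vc s.+1 C2) [seq x i | i <- enum 'I_n] =
    (-1) ^+ (r.+1 * s.+1) *: shuffle_sum C1 C2 r s x + shuffle_sum C2 C1 s r x.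
Proof.
have signE (a b : nat) : odd a = odd b -> (-1) ^+ a = (-1) ^+ b :> A.
  by move=> odd_ab; rewrite -signr_odd odd_ab signr_odd.
elim: n => [|n IHn] in r s C1 C2 x * => // -[def_n].
set x' := fun i : 'I_n => x (lift ord0 i).
have size_x' : size [seq x' i | i <- enum 'I_n] = (r + s)%N.
  by rewrite size_map size_enum_ord def_n.
rewrite enum_ordSl /= -map_comp (shuffle_sum_cons x C1 C2 def_n).
rewrite (shuffle_sum_cons x C2 C1) 1?addnC //.
case: r s => [|r] [|s] in def_n size_x' *.
- by rewrite wedge_ev_ScVc ?wedge_ev_VcSc ?addr0.
- rewrite wedge_ev_ScVc ?IHn ?size_x' //.
  rewrite !mul1n scalerDr scalerA -exprD (signE (s.+2 + 1)%N s.+1).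
    by rewrite addr0 addrA.
  by rewrite addn1 /= negbK.
- rewrite addn0 in def_n size_x'; rewrite wedge_ev_VcSc ?IHn ?addn0 //.
  rewrite !muln1 scalerDr scalerA -exprD (signE (1 + r.+1)%N r.+2) //.
  by rewrite addr0 addrAC -addrA.
- rewrite /= IHn -?addSn // IHn -?addnS // !scalerDr !scalerA -!exprD -mulSn.
  rewrite (signE (r.+2 * s.+1)%N (r.+2 * s.+2 + r.+2)%N); last first.
    by rewrite !(oddD, oddM) /=; case: (odd r); case: (odd s).
  by rewrite addrACA [X in _ + X = _]addrC.
Qed.

End Shuffles.

Unset Implicit Arguments.

Theorem mainTheorem11
  (R : comNzRingType) (A : comAlgType R) (E : lmodType A)
  (form : E -> E -> A)
  (* Q is contained in R: every positive integer is invertible in R *)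
  (hQ : forall n : nat, exists y : R, (n.+1)%:R * y = 1)
  (* E is finitely generated projective: a direct summand of A^n *)
  (hproj : exists (n : nat) (i : E -> 'rV[A]_n) (p : 'rV[A]_n -> E),
      (forall (a : A) (x y : E), i (a *: x + y) = a *: i x + i y) /\
      (forall (a : A) (u v : 'rV[A]_n), p (a *: u + v) = a *: p u + p v) /\
      (forall x : E, p (i x) = x))
  (* <.,.> is A-bilinear *)
  (hbil_l : forall (a : A) (x y z : E), form (a *: x + y) z = a * form x z + form y z)
  (hbil_r : forall (a : A) (x y z : E), form z (a *: x + y) = a * form z x + form z y)
  (* symmetric *)
  (hsym : forall x y : E, form x y = form y x)
  (* strongly nondegenerate: x |-> <x, .> is a bijection E -> Hom_A(E, A) *)
  (hnd_inj : forall x y : E, (forall z, form x z = form y z) -> x = y)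
  (hnd_surj : forall f : E -> A,
      (forall (a : A) (x y : E), f (a *: x + y) = a * f x + f y) ->
      exists x : E, forall z, form x z = f z)
  (* full *)
  (hfull : forall a : A, exists s : seq (E * E), a = \sum_(q <- s) form q.1 q.2)
  (r s : nat) (hr : (1 <= r)%N) (hs : (1 <= s)%N)
  (C1 C2 : seq E -> E)
  (hC1 : in_C form r C1) (hC2 : in_C form s C2)
  (x : 'I_(r + s - 1) -> E) :
  wedge_ev form (Vc r C1) (Vc s C2) [seq x i | i <- enum 'I_(r + s - 1)] =
    (-1) ^+ (r * s) *:
      \sum_(pi : 'S_(r + s - 1) | is_shuffle r pi)
        ((-1) ^+ odd_perm pi *
           form (C1 (xs_pi x pi 0 (r - 1))) (at_nat (fun i => x (pi i)) (r - 1)))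
          *: C2 (xs_pi x pi r (s - 1))
    + \sum_(pi : 'S_(r + s - 1) | is_shuffle s pi)
        ((-1) ^+ odd_perm pi *
           form (C2 (xs_pi x pi 0 (s - 1))) (at_nat (fun i => x (pi i)) (s - 1)))
          *: C1 (xs_pi x pi s (r - 1)).
Proof.
case: r hr C1 hC1 x => [//|r] _ C1 _; case: s hs C2 hC2 => [//|s] _ C2 _ x.
have def_n : (r + s).+1 = (r.+1 + s.+1 - 1)%N by rewrite addSn addnS subn1.
rewrite (wedge_ev_shuffle form C1 C2 x def_n) /shuffle_sum /shuffle_term.
by rewrite [(r.+1 - 1)%N]subn1 [(s.+1 - 1)%N]subn1.
Qed.
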